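(* Let $r\ge 1$ be an integer, let $k_1,\dots,k_r$ be integers, and let $a,b>0$ with $ab\neq \pm 1$. Then for every integer $n\ge 0$, $$\mathbf{E}_{n}^{(k_1,\dots,k_r)}(a,b)=\sum_{i=0}^{n}\binom{n}{i} r^{n-i}(\ln a+\ln b)^i(\ln a)^{n-i}\,\mathbf{E}_{i}^{(k_1,\dots,k_r)} .$$
   Context: For integers $k_1,\dots,k_r$, the multi-polylogarithm is $Li_{(k_1,\dots,k_r)}(z)=\sum_{0<m_1<m_2<\dots<m_r}\frac{z^{m_r}}{m_1^{k_1}m_2^{k_2}\cdots m_r^{k_r}}$ (sum over integers). For $c>0$, $c^t:=e^{t\ln c}$. The Multi Poly-Euler polynomials $\mathbf{E}_n^{(k_1,\dots,k_r)}(x)$ are defined by $$\frac{2Li_{(k_1,\dots,k_r)}(1-e^{-t})}{(1+e^t)^r}e^{rxt}=\sum_{n=0}^{\infty}\mathbf{E}_{n}^{(k_1,\dots,k_r)}(x)\frac{t^n}{n!},$$ and the Multi Poly-Euler numbers are $\mathbf{E}_{n}^{(k_1,\dots,k_r)}:=\mathbf{E}_{n}^{(k_1,\dots,k_r)}(0)$. The generalized Multi Poly-Euler polynomials with parameters $a,b$ are defined by $$\frac{2Li_{(k_1,\dots,k_r)}(1-(ab)^{-t})}{(a^{-t}+b^t)^r}e^{rxt}=\sum_{n=0}^{\infty}\mathbf{E}_{n}^{(k_1,\dots,k_r)}(x;a,b)\frac{t^n}{n!},$$ and $\mathbf{E}_{n}^{(k_1,\dots,k_r)}(a,b):=\mathbf{E}_{n}^{(k_1,\dots,k_r)}(0;a,b)$.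 *)

From Stdlib Require Import Reals ZArith List.
From Coquelicot Require Import Coquelicot.
Open Scope R_scope.

Definition inv_pow (m : nat) (k : Z) : R := / powerRZ (INR m) k.

(* nested_sum ks m0 m = sum over m0 < m_1 < ... < m_j < m of
   prod_i 1/m_i^{k_i}, where ks = [k_1; ...; k_j].  Empty list gives 1. *)
Fixpoint nested_sum (ks : list Z) (m0 m : nat) : R :=
  match ks with
  | nil => 1
  | k :: ks' =>
      sum_f_R0 (fun i => let m1 := (m0 + 1 + i)%nat in
                         if Nat.ltb m1 m then inv_pow m1 k * nested_sum ks' m1 m
                         else 0)
               (m - m0)%nat
  end.

(* Multi-polylogarithm Li_{(k_1,...,k_r)}(z)
   = sum_{0<m_1<...<m_r} z^{m_r} / (m_1^{k_1} ... m_r^{k_r}),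
   summed over the outermost index m_r (inner sums are finite).
   ks = [k_1; ...; k_r]. *)
Definition Li (ks : list Z) (z : R) : R :=
  Series (fun m => if Nat.eqb m 0 then 0
                   else z ^ m * inv_pow m (last ks 0%Z)
                        * nested_sum (removelast ks) 0 m).

Definition cpow (c t : R) : R := exp (t * ln c).

(* Multi Poly-Euler polynomials: n-th Taylor coefficient (times n!) at t = 0,
   i.e. the n-th derivative at 0, of the generating function. *)
Definition MPE_poly (ks : list Z) (x : R) (n : nat) : R :=
  let r := length ks in
  Derive_n (fun t => 2 * Li ks (1 - exp (- t)) / (1 + exp t) ^ r
                     * exp (INR r * x * t)) n 0.

Definition MPE_num (ks : list Z) (n : nat) : R := MPE_poly ks 0 n.

Definition GMPE_poly (ks : list Z) (x a b : R) (n : nat) : R :=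
  let r := length ks in
  Derive_n (fun t => 2 * Li ks (1 - cpow (a * b) (- t))
                     / (cpow a (- t) + cpow b t) ^ r
                     * exp (INR r * x * t)) n 0.

Definition GMPE_num (ks : list Z) (a b : R) (n : nat) : R := GMPE_poly ks 0 a b n.

From Stdlib Require Import Reals ZArith List Lia Lra.
From Coquelicot Require Import Coquelicot.
Open Scope R_scope.

(* Put L = ln a + ln b.  Since (ab)^(-t) = e^(-Lt) and a^(-t) + b^t = a^(-t) (1 + e^(Lt)),
   the generating function of E_n(a,b) is G(Lt) e^(r t ln a), where G is the generating
   function of the numbers E_n.  Differentiating n times at 0, Leibniz's rule for a
   product with an exponential produces the binomial sum and the chain rule for t |-> Lt
   the factors L^i.  Analytically only smoothness of G near 0 is needed: the coefficients
   of the multi-polylogarithm grow at most geometrically, so its radius is positive. *)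

Definition ex_derive_upto (U : R -> Prop) (n : nat) (f : R -> R) : Prop :=
  forall k x, (k <= n)%nat -> U x -> ex_derive_n f k x.

Lemma Derive_n_Derive f n x : Derive_n (Derive f) n x = Derive_n f (S n) x.
Proof.
  revert x; induction n as [|n IHn]; intro x; [reflexivity|].
  simpl; apply Derive_ext; exact IHn.
Qed.

Lemma ex_derive_n_Derive f n x :
  ex_derive_n (Derive f) (S n) x <-> ex_derive_n f (S (S n)) x.
Proof.
  split; apply ex_derive_ext; intro t; [|symmetry]; apply Derive_n_Derive.
Qed.

Lemma ex_derive_upto_S U n f :
  ex_derive_upto U (S n) f <->
  (forall x, U x -> ex_derive f x) /\ ex_derive_upto U n (Derive f).
Proof.
  split.
  - intros Hf; split; [exact (fun x => Hf 1%nat x (le_n_S 0 n (Nat.le_0_l n)))|].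
    intros [|k] x Hk Hx; [exact I|].
    apply (proj2 (ex_derive_n_Derive f k x)), Hf; [lia|exact Hx].
  - intros [Hf HDf] [|[|k]] x Hk Hx; [exact I|exact (Hf x Hx)|].
    apply (proj1 (ex_derive_n_Derive f k x)), HDf; [lia|exact Hx].
Qed.

Lemma ex_derive_upto_le U m n f :
  (m <= n)%nat -> ex_derive_upto U n f -> ex_derive_upto U m f.
Proof. intros Hmn Hf k x Hk; apply Hf; lia. Qed.

Lemma ex_derive_upto_locally U n f x : open U -> U x -> ex_derive_upto U n f ->
  locally x (fun y => forall k, (k <= n)%nat -> ex_derive_n f k y).
Proof.
  intros HU Hx Hf. apply (locally_open U); [exact HU| |exact Hx].
  intros y Hy k Hk; exact (Hf k y Hk Hy).
Qed.

Lemma ex_derive_upto_ext U n f g : open U -> (forall x, U x -> f x = g x) ->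
  ex_derive_upto U n f -> ex_derive_upto U n g.
Proof.
  intros HU Hfg Hf k x Hk Hx. apply (ex_derive_n_ext_loc f).
  - apply (locally_open U); [exact HU|exact Hfg|exact Hx].
  - exact (Hf k x Hk Hx).
Qed.

Lemma ex_derive_upto_const U n a : ex_derive_upto U n (fun _ => a).
Proof. intros k x _ _; apply ex_derive_n_const. Qed.

Lemma ex_derive_upto_scal U n a f :
  ex_derive_upto U n f -> ex_derive_upto U n (fun x => a * f x).
Proof. intros Hf k x Hk Hx; apply ex_derive_n_scal_l, Hf; assumption. Qed.

Lemma ex_derive_upto_plus U n f g : open U ->
  ex_derive_upto U n f -> ex_derive_upto U n g ->
  ex_derive_upto U n (fun x => f x + g x).
Proof.
  intros HU Hf Hg k x Hk Hx.
  apply ex_derive_n_plus; apply (ex_derive_upto_locally U); try assumption;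
    apply (ex_derive_upto_le U k n); assumption.
Qed.

Lemma ex_derive_upto_mult U n f g : open U ->
  ex_derive_upto U n f -> ex_derive_upto U n g ->
  ex_derive_upto U n (fun x => f x * g x).
Proof.
  intros HU; revert f g; induction n as [|n IHn]; intros f g Hf Hg.
  - intros k x Hk _; replace k with 0%nat by lia; exact I.
  - pose proof (ex_derive_upto_le U n (S n) f (Nat.le_succ_diag_r n) Hf) as Hfn.
    pose proof (ex_derive_upto_le U n (S n) g (Nat.le_succ_diag_r n) Hg) as Hgn.
    apply ex_derive_upto_S in Hf as [Hf1 HDf], Hg as [Hg1 HDg].
    apply ex_derive_upto_S; split.
    + intros x Hx; apply ex_derive_mult; auto.
    + apply (ex_derive_upto_ext U n (fun y => Derive f y * g y + f y * Derive g y));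
        [exact HU| |apply ex_derive_upto_plus; auto].
      intros x Hx; symmetry; apply Derive_mult; auto.
Qed.

Lemma ex_derive_upto_pow U n m f : open U ->
  ex_derive_upto U n f -> ex_derive_upto U n (fun x => f x ^ m).
Proof.
  intros HU Hf; induction m as [|m IHm].
  - exact (ex_derive_upto_const U n 1).
  - exact (ex_derive_upto_mult U n f _ HU Hf IHm).
Qed.

Lemma ex_derive_upto_comp U V n h f : open U -> (forall x, U x -> V (h x)) ->
  ex_derive_upto U n h -> ex_derive_upto V n f ->
  ex_derive_upto U n (fun x => f (h x)).
Proof.
  intros HU HUV; revert f; induction n as [|n IHn]; intros f Hh Hf.
  - intros k x Hk _; replace k with 0%nat by lia; exact I.
  - pose proof (ex_derive_upto_le U n (S n) h (Nat.le_succ_diag_r n) Hh) as Hhn.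
    apply ex_derive_upto_S in Hh as [Hh1 HDh], Hf as [Hf1 HDf].
    apply ex_derive_upto_S; split.
    + intros x Hx; apply ex_derive_comp; auto.
    + apply (ex_derive_upto_ext U n (fun y => Derive h y * Derive f (h y)));
        [exact HU| |apply ex_derive_upto_mult; auto].
      intros x Hx; symmetry; apply Derive_comp; auto.
Qed.

Lemma ex_derive_upto_comp_scal U n a f : open U -> ex_derive_upto U n f ->
  ex_derive_upto (fun t => U (a * t)) n (fun t => f (a * t)).
Proof.
  intros HU Hf k x Hk Hx. apply ex_derive_n_comp_scal.
  apply (ex_derive_upto_locally U); [exact HU|exact Hx|].
  exact (ex_derive_upto_le U k n f Hk Hf).
Qed.

Lemma ex_derive_upto_exp_scal U n c : ex_derive_upto U n (fun t => exp (c * t)).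
Proof.
  intros k x _ _. apply ex_derive_n_comp_scal, filter_forall.
  intros y [|j] _; [exact I|]. exists (exp y); exact (is_derive_n_exp (S j) y).
Qed.

(* Induct on the order, using [u' = u^2 - u]. *)
Lemma ex_derive_upto_inv_1_plus_exp U n : open U ->
  ex_derive_upto U n (fun s => / (1 + exp s)).
Proof.
  intros HU; induction n as [|n IHn].
  - intros k x Hk _; replace k with 0%nat by lia; exact I.
  - apply ex_derive_upto_S; split.
    + intros x _; auto_derive; pose proof (exp_pos x); lra.
    + apply (ex_derive_upto_ext U n
        (fun s => / (1 + exp s) * / (1 + exp s) + (-1) * / (1 + exp s)));
        [exact HU| |apply ex_derive_upto_plus, ex_derive_upto_scal;
                     auto using ex_derive_upto_mult].
      intros x _; pose proof (exp_pos x).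
      symmetry; apply is_derive_unique; auto_derive; [lra|field; lra].
Qed.

Lemma pascal_sum c (d : nat -> R) n :
  sum_f_R0 (fun i => Binomial.C n i * c ^ (n - i) * (d (S i) + c * d i)) n =
  sum_f_R0 (fun i => Binomial.C (S n) i * c ^ (S n - i) * d i) (S n).
Proof.
  destruct n as [|m].
  { simpl; rewrite ?C_n_0, ?C_n_n, ?(C_n_0 1), ?(C_n_n 1); simpl; ring. }
  set (N := S m).
  set (A := fun i => Binomial.C N i * c ^ (N - i) * d (S i)).
  set (B := fun i => Binomial.C N i * c ^ (N - i) * (c * d i)).
  set (T := fun i => Binomial.C (S N) i * c ^ (S N - i) * d i).
  transitivity (sum_f_R0 (fun i => A i + B i) N).
  { apply sum_eq; intros i _; unfold A, B; ring. }
  rewrite plus_sum.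
  unfold N at 1; rewrite tech5; fold N.
  rewrite (decomp_sum B N) by (unfold N; lia); unfold N at 2; simpl pred.
  rewrite (decomp_sum T (S N)) by lia; simpl pred.
  unfold N at 2; rewrite tech5; fold N.
  assert (T_first : T 0%nat = B 0%nat).
  { unfold T, B; rewrite !C_n_0, !Nat.sub_0_r; simpl; ring. }
  assert (T_last : T (S N) = A N).
  { unfold T, A; rewrite !C_n_n, !Nat.sub_diag; ring. }
  assert (T_middle : sum_f_R0 (fun i => T (S i)) m =
                     sum_f_R0 (fun i => A i + B (S i)) m).
  { apply sum_eq; intros i Hi; unfold T, A, B.
    rewrite <- pascal by (unfold N; lia).
    replace (S N - S i)%nat with (N - i)%nat by lia.
    replace (N - i)%nat with (S (N - S i)) by (unfold N; lia); simpl; ring. }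
  rewrite T_first, T_last, T_middle, plus_sum; ring.
Qed.

(* [(g e^{ct})' = (g' + c g) e^{ct}]; the binomial sum then follows from Pascal's rule. *)
Lemma Derive_n_mult_exp_scal U n c g x : open U -> ex_derive_upto U n g -> U x ->
  Derive_n (fun t => g t * exp (c * t)) n x =
  sum_f_R0 (fun i => Binomial.C n i * c ^ (n - i) * Derive_n g i x) n * exp (c * x).
Proof.
  intros HU; revert g x; induction n as [|n IHn]; intros g x Hg Hx.
  { simpl; rewrite C_n_0; ring. }
  pose proof (ex_derive_upto_le U n (S n) g (Nat.le_succ_diag_r n) Hg) as Hgn.
  apply ex_derive_upto_S in Hg as [Hg1 HDg].
  set (g' := fun t => Derive g t + c * g t).
  assert (Hg' : ex_derive_upto U n g').
  { apply ex_derive_upto_plus, ex_derive_upto_scal; assumption. }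
  assert (Hderiv : locally x (fun t => Derive (fun t => g t * exp (c * t)) t
                                       = g' t * exp (c * t))).
  { apply (locally_open U); [exact HU| |exact Hx]; intros y Hy.
    rewrite Derive_mult; [|exact (Hg1 y Hy)|auto_derive; exact I].
    replace (Derive (fun t => exp (c * t)) y) with (c * exp (c * y)).
    - unfold g'; ring.
    - symmetry; apply is_derive_unique; auto_derive; [exact I|ring]. }
  rewrite <- Derive_n_Derive, (Derive_n_ext_loc _ _ n x Hderiv).
  etransitivity; [exact (IHn g' x Hg' Hx)|].
  rewrite <- (pascal_sum c (fun i => Derive_n g i x)).
  f_equal; apply sum_eq; intros i Hi; f_equal.
  unfold g'; rewrite Derive_n_plus, Derive_n_scal_l, Derive_n_Derive; [reflexivity| |];
    apply (ex_derive_upto_locally U); try assumption.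
  - exact (ex_derive_upto_le U i n _ Hi HDg).
  - exact (ex_derive_upto_le U i n _ Hi (ex_derive_upto_scal U n c g Hgn)).
Qed.

Lemma INR_S_le_pow2 m : INR (S m) <= 2 ^ m.
Proof.
  apply Rle_trans with (INR (2 ^ m)).
  - apply le_INR, Nat.pow_gt_lin_r; lia.
  - rewrite pow_INR; right; reflexivity.
Qed.

Lemma inv_pow_bound j m k : (1 <= j <= m)%nat ->
  Rabs (inv_pow j k) <= (2 ^ Z.abs_nat k) ^ m.
Proof.
  intros Hj; unfold inv_pow.
  assert (Hj1 : 1 <= INR j) by (apply (le_INR 1); lia).
  assert (Hge1 : forall p, 1 <= (2 ^ p) ^ m) by (intro p; apply pow_R1_Rle, pow_R1_Rle; lra).
  destruct k as [|p|p]; simpl powerRZ.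
  - rewrite Rinv_1, Rabs_R1; apply Hge1.
  - pose proof (pow_R1_Rle _ (Pos.to_nat p) Hj1).
    rewrite Rabs_pos_eq by (left; apply Rinv_0_lt_compat; lra).
    apply Rle_trans with 1; [|apply Hge1].
    rewrite <- Rinv_1; apply Rinv_le_contravar; lra.
  - pose proof (pow_R1_Rle _ (Pos.to_nat p) Hj1).
    rewrite Rinv_inv, Rabs_pos_eq by lra; simpl Z.abs_nat.
    rewrite <- pow_mult, Nat.mul_comm, pow_mult.
    apply pow_incr; split; [lra|].
    apply Rle_trans with (INR (S m)); [apply le_INR; lia|apply INR_S_le_pow2].
Qed.

Lemma nested_sum_bound ks :
  exists B, 1 <= B /\ forall m0 m, Rabs (nested_sum ks m0 m) <= B ^ m.
Proof.
  induction ks as [|k ks [B [HB IH]]].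
  { exists 1; split; [lra|]; intros m0 m; simpl; rewrite Rabs_R1, pow1; lra. }
  set (K := 2 ^ Z.abs_nat k).
  assert (HK : 1 <= K) by (apply pow_R1_Rle; lra).
  exists (2 * (K * B)); split; [nra|]; intros m0 m; simpl nested_sum.
  assert (HKB : 0 <= (K * B) ^ m) by (apply pow_le; nra).
  eapply Rle_trans; [apply sum_f_R0_triangle|].
  eapply Rle_trans; [apply (sum_Rle _ (fun _ => (K * B) ^ m))|].
  - intros i Hi; destruct (Nat.ltb (m0 + 1 + i) m) eqn:Hlt.
    + apply Nat.ltb_lt in Hlt; rewrite Rabs_mult, Rpow_mult_distr.
      apply Rmult_le_compat; try apply Rabs_pos; [apply inv_pow_bound; lia|apply IH].
    + rewrite Rabs_R0; exact HKB.
  - rewrite sum_cte, (Rpow_mult_distr 2 (K * B) m), Rmult_comm.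
    apply Rmult_le_compat_r; [exact HKB|].
    apply Rle_trans with (INR (S m)); [apply le_INR; lia|apply INR_S_le_pow2].
Qed.

Definition Li_coef (ks : list Z) (m : nat) : R :=
  if Nat.eqb m 0 then 0
  else inv_pow m (last ks 0%Z) * nested_sum (removelast ks) 0 m.

Lemma Li_PSeries ks z : Li ks z = PSeries (Li_coef ks) z.
Proof.
  unfold Li, PSeries; apply Series_ext; intro m; unfold Li_coef.
  destruct (Nat.eqb m 0); ring.
Qed.

Lemma Li_coef_bound ks : exists B, 1 <= B /\ forall m, Rabs (Li_coef ks m) <= B ^ m.
Proof.
  destruct (nested_sum_bound (removelast ks)) as [B [HB Hnested]].
  set (K := 2 ^ Z.abs_nat (last ks 0%Z)).
  assert (HK : 1 <= K) by (apply pow_R1_Rle; lra).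
  exists (K * B); split; [nra|]; intro m; unfold Li_coef.
  destruct (Nat.eqb m 0) eqn:Hm.
  - rewrite Rabs_R0; apply pow_le; nra.
  - apply Nat.eqb_neq in Hm; rewrite Rabs_mult, Rpow_mult_distr.
    apply Rmult_le_compat; try apply Rabs_pos; [apply inv_pow_bound; lia|apply Hnested].
Qed.

Lemma CV_radius_Li_coef_pos ks : exists rho, 0 < rho /\ Rbar_lt rho (CV_radius (Li_coef ks)).
Proof.
  destruct (Li_coef_bound ks) as [B [HB Hbound]].
  exists (/ (2 * B)); split; [apply Rinv_0_lt_compat; lra|].
  apply Rbar_lt_le_trans with (/ B); [simpl; apply Rinv_lt_contravar; nra|].
  apply (proj1 (CV_radius_bounded (Li_coef ks))); exists 1; intro n.
  assert (HBn : 0 < B ^ n) by (apply pow_lt; lra).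
  rewrite Rabs_mult, pow_inv, Rabs_inv, (Rabs_pos_eq (B ^ n)) by lra.
  apply (Rmult_le_reg_r (B ^ n)); [exact HBn|].
  rewrite Rmult_assoc, Rinv_l, Rmult_1_l, Rmult_1_r by lra; apply Hbound.
Qed.

Definition MPE_gf (ks : list Z) (s : R) : R :=
  2 * PSeries (Li_coef ks) (1 - exp (- s)) * (/ (1 + exp s)) ^ length ks.

Lemma MPE_num_Derive_n ks n : MPE_num ks n = Derive_n (MPE_gf ks) n 0.
Proof.
  unfold MPE_num, MPE_poly; cbv zeta; apply Derive_n_ext; intro t; unfold MPE_gf.
  rewrite Li_PSeries, Rmult_0_r, Rmult_0_l, exp_0, pow_inv; unfold Rdiv; ring.
Qed.

Lemma MPE_gf_ex_derive ks :
  exists U, open U /\ U 0 /\ forall n, ex_derive_upto U n (MPE_gf ks).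
Proof.
  destruct (CV_radius_Li_coef_pos ks) as [rho [Hrho Hradius]].
  set (V := fun z => - rho < z < rho).
  set (U := fun s => V (1 - exp (- s))).
  assert (HV : open V) by (apply open_and; [apply open_gt|apply open_lt]).
  assert (HU : open U).
  { apply (open_comp (fun s => 1 - exp (- s)) V); [|exact HV].
    intros x _.
    assert (Hd : ex_derive (fun s => 1 - exp (- s)) x) by (auto_derive; exact I).
    exact (ex_derive_continuous _ _ Hd). }
  exists U; split; [exact HU|]; split.
  { unfold U, V; rewrite Ropp_0, exp_0; lra. }
  intro n; unfold MPE_gf; apply ex_derive_upto_mult; [exact HU| |].
  - apply ex_derive_upto_scal, (ex_derive_upto_comp U V); [exact HU|now intros| |].
    + apply (ex_derive_upto_ext U n (fun s => 1 + (-1) * exp ((-1) * s))); [exact HU| |].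
      * intros x _; replace ((-1) * x) with (- x) by ring; ring.
      * apply ex_derive_upto_plus, ex_derive_upto_scal, ex_derive_upto_exp_scal;
          [exact HU|apply ex_derive_upto_const].
    + intros k z _ [Hlo Hhi]; apply ex_derive_n_PSeries.
      apply Rbar_lt_trans with rho; [simpl; apply Rabs_def1; lra|exact Hradius].
  - apply ex_derive_upto_pow, ex_derive_upto_inv_1_plus_exp; exact HU.
Qed.

Lemma exp_INR_mult n y : exp (INR n * y) = exp y ^ n.
Proof.
  induction n as [|n IHn]; [simpl; rewrite Rmult_0_l, exp_0; reflexivity|].
  rewrite S_INR, Rmult_plus_distr_r, Rmult_1_l, exp_plus, IHn; simpl; ring.
Qed.

Lemma GMPE_gf_eq ks a b t : 0 < a -> 0 < b ->
  2 * Li ks (1 - cpow (a * b) (- t)) / (cpow a (- t) + cpow b t) ^ length ks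
    * exp (INR (length ks) * 0 * t) =
  MPE_gf ks ((ln a + ln b) * t) * exp (INR (length ks) * ln a * t).
Proof.
  intros Ha Hb; unfold cpow, MPE_gf; rewrite Li_PSeries, ln_mult by lra.
  replace (- t * (ln a + ln b)) with (- ((ln a + ln b) * t)) by ring.
  replace (INR (length ks) * 0 * t) with 0 by ring; rewrite exp_0.
  assert (Hdenom : exp (- t * ln a) + exp (t * ln b)
                   = / exp (t * ln a) * (1 + exp ((ln a + ln b) * t))).
  { replace ((ln a + ln b) * t) with (t * ln a + t * ln b) by ring.
    replace (- t * ln a) with (- (t * ln a)) by ring.
    rewrite exp_plus, exp_Ropp; pose proof (exp_pos (t * ln a)); field; lra. }
  rewrite Hdenom.
  replace (INR (length ks) * ln a * t) with (INR (length ks) * (t * ln a)) by ring.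
  rewrite exp_INR_mult, Rpow_mult_distr, !pow_inv.
  pose proof (exp_pos (t * ln a)); pose proof (exp_pos ((ln a + ln b) * t)).
  field; split; apply pow_nonzero; lra.
Qed.

Theorem theorem2 (ks : list Z) (a b : R) :
  (1 <= length ks)%nat -> 0 < a -> 0 < b -> a * b <> 1 -> a * b <> -1 ->
  forall n : nat,
    GMPE_num ks a b n =
    sum_f_R0 (fun i => Binomial.C n i * INR (length ks) ^ (n - i)
                        * (ln a + ln b) ^ i * (ln a) ^ (n - i) * MPE_num ks i) n.
Proof.
  intros _ Ha Hb _ _ n.
  destruct (MPE_gf_ex_derive ks) as [U [HU [HU0 Hgf]]].
  set (L := ln a + ln b); set (c := INR (length ks) * ln a).
  set (U' := fun t => U (L * t)).
  assert (HU' : open U').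
  { apply (open_comp (fun t => L * t) U); [|exact HU].
    intros x _.
    assert (Hd : ex_derive (fun t => L * t) x) by (auto_derive; exact I).
    exact (ex_derive_continuous _ _ Hd). }
  assert (HU'0 : U' 0) by (unfold U'; rewrite Rmult_0_r; exact HU0).
  unfold GMPE_num, GMPE_poly; cbv zeta.
  rewrite (Derive_n_ext _ (fun t => MPE_gf ks (L * t) * exp (c * t)))
    by (intro; apply GMPE_gf_eq; assumption).
  rewrite (Derive_n_mult_exp_scal U' n c _ 0 HU' (ex_derive_upto_comp_scal U n L _ HU (Hgf n)) HU'0).
  rewrite Rmult_0_r, exp_0, Rmult_1_r.
  apply sum_eq; intros i Hi.
  rewrite Derive_n_comp_scal, Rmult_0_r, MPE_num_Derive_n.
  - unfold c; rewrite Rpow_mult_distr; ring.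
  - rewrite Rmult_0_r; exact (ex_derive_upto_locally U i _ 0 HU HU0 (Hgf i)).
Qed.
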